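(* Let $n\geq 1$, let $\mathcal{X}=\{-1,1\}^n$, and let $\mathcal{P}\subseteq[0,1]$ be a Lebesgue measurable set with Lebesgue measure $\mu(\mathcal{P})>0$. Let $\mathcal{K}$ be the set of admissible controllers, i.e. maps $K:\mathcal{X}\to\mathbb{R}^n$, $X=(X_0,\dots,X_{n-1})\mapsto (K_0(X),\dots,K_{n-1}(X))$, such that for each $k\in\{0,\dots,n-1\}$ the value $K_k(X)$ depends only on $X_0,\dots,X_{k-1}$ (causality; in particular $K_0$ is constant), and $|K_k(X)|\leq 1$ for all $X$ and $k$. For $K\in\mathcal{K}$ and $p\in[0,1]$ let \[ ELG_K(p)\doteq\frac{1}{n}\sum_{X\in\mathcal{X}}P_p(X)\sum_{k=0}^{n-1}\log\bigl(1+K_k(X)X_k\bigr),\qquad P_p(X)\doteq p^{n_h(X)}(1-p)^{n-n_h(X)}, \] where $n_h(X)=\#\{i: X_i=1\}$, with the conventions $\log 0=-\infty$ and $0\cdot(-\infty)=0$. Then the function \[ f(K)\doteq\int_{p\in\mathcal{P}}ELG_K(p)\,dp,\qquad K\in\mathcal{K}, \] has a unique maximizer $K^*\in\mathcal{K}$, given, for each stage $k\in\{0,\dots,n-1\}$ and each sample path $\bar X\in\mathcal{X}$, by \[ K_k^*(\bar X)=\frac{\int_{p\in\mathcal{P}}p^{q_k}(1-p)^{k-q_k}(2p-1)\,dp}{\int_{p\in\mathcal{P}}p^{q_k}(1-p)^{k-q_k}\,dp}, \] where $q_k=q_k(\bar X)=\#\{i\in\{0,\dots,k-1\}:\bar X_i=1\}$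 (so $q_0=0$).
   Context: Interpretation: a bettor flips a coin $n$ times with probability of heads $p$ and even-money payoff; $X_k=1$ means heads and $X_k=-1$ tails at flip $k$. Starting from wealth $V_0>0$, the bet at stage $k$ is $u_k=K_k(X)V_k$ (positive means a bet on heads, negative on tails), and wealth evolves as $V_{k+1}=(1+K_k(X)X_k)V_k$; thus $ELG_K(p)=\frac1n\mathbb{E}\log(V_n/V_0)$. The set $\mathcal{P}$ represents the uncertainty in the probability of heads. *)

From HB Require Import structures.
From mathcomp Require Import all_boot all_order all_algebra.
From mathcomp Require Import all_classical all_reals all_analysis.
Set Implicit Arguments. Unset Strict Implicit. Unset Printing Implicit Defensive.
Import Order.TTheory GRing.Theory Num.Theory.
Local Open Scope classical_set_scope.
Local Open Scope ring_scope.

Section Betting.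
Variables (R : realType) (n : nat).

(* Sample paths X in {-1,1}^n, encoded as boolean functions: true = heads = +1. *)
Definition spath := {ffun 'I_n -> bool}.

Definition sgnb (b : bool) : R := if b then 1 else -1.

Definition nheads (X : spath) : nat := #|[pred i : 'I_n | X i]|.

Definition Pp (p : R) (X : spath) : R := p ^+ nheads X * (1 - p) ^+ (n - nheads X).

(* Extended logarithm with log 0 = -oo (arguments <= 0 never occur for
   admissible controllers except 0). *)
Definition elog (x : R) : \bar R := if x <= 0 then -oo%E else (ln x)%:E.

Definition controller := spath -> 'I_n -> R.

Definition admissible (K : controller) : Prop :=
  (forall (k : 'I_n) (X Y : spath),
      (forall i : 'I_n, (i < k)%N -> X i = Y i) -> K X k = K Y k) /\
  (forall (X : spath) (k : 'I_n), `|K X k| <= 1).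

(* ELG_K(p); mathcomp's extended-real product satisfies 0 * -oo = 0. *)
Definition ELG (K : controller) (p : R) : \bar R :=
  ((n%:R)^-1)%:E *
  (\sum_(X : spath) ((Pp p X)%:E * \sum_(k < n) elog (1 + K X k * sgnb (X k))))%E.

Definition fobj (P : set R) (K : controller) : \bar R :=
  (\int[@lebesgue_measure R]_(p in P) ELG K p)%E.

Definition qk (X : spath) (k : 'I_n) : nat := #|[pred i : 'I_n | (i < k)%N && X i]|.

Definition Kstar (P : set R) : controller := fun X k =>
  (\int[@lebesgue_measure R]_(p in P)
      (p ^+ qk X k * (1 - p) ^+ (k - qk X k) * (2 * p - 1))) /
  (\int[@lebesgue_measure R]_(p in P)
      (p ^+ qk X k * (1 - p) ^+ (k - qk X k))).

End Betting.

From HB Require Import structures.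
From mathcomp Require Import all_boot all_order all_algebra.
From mathcomp Require Import all_classical all_reals all_analysis.
From mathcomp Require Import ring lra.
Set Implicit Arguments. Unset Strict Implicit. Unset Printing Implicit Defensive.
Import Order.TTheory GRing.Theory Num.Theory.
Import numFieldNormedType.Exports.
Local Open Scope classical_set_scope.
Local Open Scope ring_scope.

(* A controller taking the value +1 or -1 somewhere goes broke on a path that
   has positive probability for every p in (0,1), so its objective is -oo;
   hence only controllers with values in (-1,1) compete, and K* is one of them.
   For those, integrating over p first gives
     f(K) = 1/n * sum_X m(X) * sum_k log (1 + K_k(X) X_k),
   where m_S(X) = int_P p^h (1-p)^t dp, with h and t the numbers of heads and
   tails of X in S, is the P-mixture probability of the coordinates of X in S.
   These mixtures are consistent (summing out a coordinate yields the mixture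
   of the others) and K_k only looks at the prefix {0,..,k-1}, so stage k
   contributes, up to a positive factor,
     sum_X (A log (1 + K_k(X)) + B log (1 - K_k(X))),
   with A, B > 0 the mixtures of the prefix of X followed by heads, resp.
   tails.  By Gibbs' inequality (log y <= y - 1) each summand is uniquely
   maximal at K_k(X) = (A - B) / (A + B), which is K*_k(X). *)

Section PathSums.
Variables (R : numFieldType) (I : finType).
Local Notation path := {ffun I -> bool}.
Implicit Types (X : path) (S : {set I}).

Definition upd X (j : I) (b : bool) : path := [ffun i => if i == j then b else X i].

Lemma upd_eq X j b : upd X j b j = b.
Proof. by rewrite ffunE eqxx. Qed.

Lemma upd_neq X j b i : i != j -> upd X j b i = X i.
Proof. by rewrite ffunE => /negbTE ->. Qed.

Lemma upd_id X j : upd X j (X j) = X.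
Proof. by apply/ffunP => i; rewrite ffunE; case: eqP => [->|]. Qed.

Lemma upd_upd X j b c : upd (upd X j b) j c = upd X j c.
Proof. by apply/ffunP => i; rewrite !ffunE; case: eqP. Qed.

Lemma sum_upd j (F : path -> R) :
  \sum_X F X = 2^-1 * \sum_X (F (upd X j true) + F (upd X j false)).
Proof.
pose flip X := upd X j (~~ X j).
have flipK : involutive flip by move=> X; rewrite /flip upd_upd upd_eq negbK upd_id.
have pairE X : F X + F (flip X) = F (upd X j true) + F (upd X j false).
  by rewrite /flip -{1 2}(upd_id X j); case: (X j); rewrite ?upd_upd 1?addrC.
have sum_flip : \sum_X F (flip X) = \sum_X F X.
  by rewrite [RHS](reindex_inj (can_inj flipK)).
by rewrite -(eq_bigr _ (fun X _ => pairE X)) big_split /= sum_flip; field.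
Qed.

Lemma card_setCU1 S j : j \notin S -> #|~: S| = #|~: (j |: S)|.+1.
Proof.
by move=> jS; rewrite (cardsD1 j) inE jS finset.setCU finset.setIC -finset.setDE.
Qed.

Variable w : {set I} -> path -> R.
Hypothesis w_consistent : forall S X j, j \notin S ->
  w (j |: S) (upd X j true) + w (j |: S) (upd X j false) = w S X.

Lemma sum_marginal1 S j (g : path -> R) :
  j \notin S -> (forall X b, g (upd X j b) = g X) ->
  \sum_X w (j |: S) X * g X = 2^-1 * \sum_X w S X * g X.
Proof.
move=> jS gj; rewrite (sum_upd j); congr (_ * _); apply: eq_bigr => X _.
by rewrite !gj -mulrDl w_consistent.
Qed.

Lemma sum_marginal S (g : path -> R) :
  (forall X j b, j \notin S -> g (upd X j b) = g X) ->
  \sum_X w [set: I] X * g X = 2^-#|~: S| * \sum_X w S X * g X.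
Proof.
move: {2}#|~: S| (erefl #|~: S|) => m; elim: m S => [|m IHm] S cardS gS.
  have /finset.setC_inj -> : ~: S = ~: [set: I] by rewrite finset.setCT; exact: cards0_eq.
  by rewrite finset.setCT cards0 expr0 invr1 mul1r.
have [j jS] : exists j, j \in ~: S by apply/set0Pn; rewrite -card_gt0 cardS.
rewrite inE in jS.
have gSj X i b : i \notin j |: S -> g (upd X i b) = g X.
  by rewrite in_setU1 negb_or => /andP[_]; exact: gS.
rewrite (IHm (j |: S)) //; last by apply: succn_inj; rewrite -card_setCU1.
rewrite (sum_marginal1 jS) => [|X b]; last exact: gS.
by rewrite (card_setCU1 jS) exprSr invfM mulrA.
Qed.

Lemma sum_marginal_at S j (h : path -> bool -> R) :
  j \notin S -> (forall X i b, i \notin S -> h (upd X i b) =1 h X) ->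
  \sum_X w [set: I] X * h X (X j) = 2^-#|~: S| *
    \sum_X (w (j |: S) (upd X j true) * h X true +
            w (j |: S) (upd X j false) * h X false).
Proof.
move=> jS hS; rewrite (sum_marginal (S := j |: S)); last first.
  move=> X i b; rewrite in_setU1 negb_or => /andP[ij iS].
  by rewrite upd_neq 1?eq_sym // (hS X i b iS).
rewrite (sum_upd j) (card_setCU1 jS) exprSr invfM -mulrA; congr (_ * (_ * _)).
by apply: eq_bigr => X _; rewrite !upd_eq !hS.
Qed.

End PathSums.

Section BernoulliWeights.
Variables (R : comPzRingType) (I : finType).
Local Notation path := {ffun I -> bool}.
Implicit Types (X : path) (S : {set I}) (p : R).

Definition bern p (b : bool) : R := if b then p else 1 - p.

Definition lik S p X : R := \prod_(i in S) bern p (X i).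

Lemma lik_setU1 S j p X : j \notin S -> lik (j |: S) p X = bern p (X j) * lik S p X.
Proof. exact: big_setU1. Qed.

Lemma lik_upd S j b p X : j \notin S -> lik S p (upd X j b) = lik S p X.
Proof.
move=> jS; apply: eq_bigr => i iS; rewrite upd_neq //.
by apply: contraNneq jS => <-.
Qed.

Lemma lik_upd_setU1 S j b p X : j \notin S ->
  lik (j |: S) p (upd X j b) = bern p b * lik S p X.
Proof. by move=> jS; rewrite lik_setU1 // upd_eq lik_upd. Qed.

Lemma lik_consistent S j p X : j \notin S ->
  lik (j |: S) p (upd X j true) + lik (j |: S) p (upd X j false) = lik S p X.
Proof. by move=> jS; rewrite !lik_upd_setU1 //= -mulrDl addrC subrK mul1r. Qed.

Lemma likE S p X : lik S p X =
  p ^+ #|[pred i in S | X i]| * (1 - p) ^+ (#|S| - #|[pred i in S | X i]|).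
Proof.
rewrite /lik (bigID (fun i => X i)) /=.
rewrite (eq_bigr (fun=> p)) => [|i /andP[_ ->] //].
rewrite [X in _ * X](eq_bigr (fun=> 1 - p)) => [|i /andP[_ /negbTE ->] //].
rewrite !prodr_const -(cardID [pred i | X i] S) addKn.
by congr (_ * _ ^+ _); apply: eq_card => i; rewrite !inE andbC.
Qed.

End BernoulliWeights.

Section Gibbs.
Variable R : realType.

Lemma ln_le_subr1 (y : R) : 0 < y -> ln y <= y - 1.
Proof. by move=> y0; have := @le_ln1Dx R (y - 1); rewrite [1 + _]addrC subrK; apply; lra. Qed.

Lemma ln_lt_subr1 (y : R) : 0 < y -> y != 1 -> ln y < y - 1.
Proof.
move=> y0 y1; have := @expR_gt1Dx R (ln y).
by rewrite ln_eq0 // y1 lnK ?posrE // => /(_ isT); lra.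
Qed.

Lemma ratio_in_open (A B : R) : 0 < A -> 0 < B -> -1 < (A - B) / (A + B) < 1.
Proof.
move=> A0 B0; have AB0 : 0 < A + B by rewrite addr_gt0.
by rewrite ltr_pdivlMr // ltr_pdivrMr // mul1r mulN1r; apply/andP; split; lra.
Qed.

Lemma gibbs_lt (A B u : R) : 0 < A -> 0 < B -> -1 < u < 1 ->
  u != (A - B) / (A + B) ->
  A * ln (1 + u) + B * ln (1 - u) <
  A * ln (1 + (A - B) / (A + B)) + B * ln (1 - (A - B) / (A + B)).
Proof.
move=> A0 B0 /andP[u1 u2] uu; set a := 1 + (A - B) / (A + B); set b := 1 - (A - B) / (A + B).
have AB0 : A + B != 0 by rewrite lt0r_neq0 ?addr_gt0.
have aE : a = 2 * A / (A + B) by rewrite /a; field.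
have bE : b = 2 * B / (A + B) by rewrite /b; field.
have a0 : 0 < a by rewrite aE divr_gt0 ?mulr_gt0 ?addr_gt0.
have b0 : 0 < b by rewrite bE divr_gt0 ?mulr_gt0 ?addr_gt0.
have ua : (1 + u) / a != 1.
  by apply: contra_neq uu => /divr1_eq; rewrite /a => e; lra.
have lt1 := ln_lt_subr1 (divr_gt0 (ltac:(lra) : 0 < 1 + u) a0) ua.
have le2 := ln_le_subr1 (divr_gt0 (ltac:(lra) : 0 < 1 - u) b0).
(* the linear bounds on the two logarithms sum to zero *)
have sum0 : A * ((1 + u) / a - 1) + B * ((1 - u) / b - 1) = 0.
  by rewrite aE bE; field; rewrite AB0 !lt0r_neq0.
rewrite !ln_div ?posrE // in lt1 le2; [|lra|lra].
nra.
Qed.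

End Gibbs.

Section IntegralsOnUnitInterval.
Variables (R : realType) (P : set R).
Hypotheses (P01 : P `<=` `[0, 1]) (mP : measurable P).
Local Notation mu := (@lebesgue_measure R).

Lemma continuous_integrable (f : R -> R) :
  continuous f -> mu.-integrable P (EFin \o f).
Proof.
move=> cf; apply: (@integrableS _ _ _ mu `[0, 1] P) => //.
apply: continuous_compact_integrable; first exact: segment_compact.
exact: continuous_subspaceT.
Qed.

Lemma continuous_integralEFin (f : R -> R) : continuous f ->
  (\int[mu]_(x in P) (f x)%:E)%E = (\int[mu]_(x in P) f x)%:E.
Proof.
by move=> cf; rewrite fineK //; apply: integrable_fin_num => //; exact: continuous_integrable.
Qed.

Lemma ae_in_open01 (Q : R -> Prop) : (forall x, P x -> 0 < x < 1 -> Q x) ->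
  {ae mu, forall x, P x -> Q x}.
Proof.
move=> PQ; have [N [mN N0 N01]] : mu.-negligible ([set 0] `|` [set 1]).
  by apply: negligibleU; apply/negligibleP => //; exact: lebesgue_measure_set1.
exists N; split => // x /= /not_implyP[Px nQx]; apply: (N01 x).
apply: contra_notP nQx => x01; apply: PQ => //.
have := P01 Px; rewrite /= in_itv /= => /andP[x0 x1].
by rewrite !lt_neqAle x0 x1 !andbT; apply/andP; split; apply/eqP => e;
  apply: x01; [left|right].
Qed.

Lemma Rintegral_gt0 (f : R -> R) : continuous f ->
  (forall x, P x -> 0 <= f x) -> (forall x, P x -> 0 < x < 1 -> 0 < f x) ->
  (0 < mu P)%E -> 0 < \int[mu]_(x in P) f x.
Proof.
move=> cf f0 fpos muP; rewrite lt_def Rintegral_ge0 // andbT; apply/eqP => int0.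
have ae0 : {ae mu, forall x, P x -> (f x)%:E = 0%E}.
  apply/(ae_eq_integral_abs mu mP (measurable_int mu (continuous_integrable cf))).
  rewrite -[RHS]/(0%:E) -int0 -continuous_integralEFin //.
  by apply: eq_integral => x /set_mem Px; rewrite gee0_abs // lee_fin f0.
have [N [mN N0 PN]] : {ae mu, forall x, ~ P x}.
  (* the [Filter] instance of the a.e. filter is not found by inference here *)
  have ae_filter := @ae_filter_ringOfSetsType _ _ _ mu.
  apply: (filterS2 _ _ (ae_in_open01 fpos) ae0) => x fx_gt0 fx_eq0 Px.
  by have := fx_gt0 Px; rewrite -lte_fin fx_eq0 // ltxx.
have : (mu P <= mu N)%E.
  by apply: le_measure; rewrite ?inE // => x Px; apply: PN => /=; apply.
by rewrite N0 leNgt muP.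
Qed.

End IntegralsOnUnitInterval.

Lemma continuous_lik (R : realType) (I : finType) (S : {set I}) (X : {ffun I -> bool}) :
  continuous (fun p : R => lik S p X).
Proof.
have -> : (fun p => lik S p X) =
    horner (\prod_(i in S) (if X i then polyX R else 1 - polyX R)).
  apply/funext => p; rewrite horner_prod; apply: eq_bigr => i _.
  by case: (X i); rewrite /= !hornerE.
exact: continuous_horner.
Qed.

Lemma ler_lt_sum (R : numDomainType) (I : finType) (F G : I -> R) i0 :
  (forall i, F i <= G i) -> F i0 < G i0 -> \sum_i F i < \sum_i G i.
Proof.
move=> FG FG0; rewrite (bigD1 i0) // [ltRHS](bigD1 i0) //=.
by apply: ltr_leD => //; exact: ler_sum.
Qed.

Section Betting.
Variables (R : realType) (n : nat) (P : set R).
Hypotheses (P01 : P `<=` `[0, 1]) (mP : measurable P)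
  (muP : (0 < @lebesgue_measure R P)%E).
Local Notation mu := (@lebesgue_measure R).
Local Notation Kstar := (@Kstar R n P).
Implicit Types (X : spath n) (K : controller R n) (S : {set 'I_n}) (k : 'I_n) (p : R).

Definition marglik S X : R := \int[mu]_(p in P) lik S p X.

Lemma marglik_consistent S X j : j \notin S ->
  marglik (j |: S) (upd X j true) + marglik (j |: S) (upd X j false) = marglik S X.
Proof.
move=> jS; rewrite /marglik -RintegralD //;
  try exact/continuous_integrable/continuous_lik.
by apply: eq_Rintegral => p _; rewrite lik_consistent.
Qed.

Lemma marglik_gt0 S X : 0 < marglik S X.
Proof.
apply: Rintegral_gt0 => //; first exact: continuous_lik.
- move=> p /P01; rewrite /= in_itv /= => /andP[p0 p1].
  by apply: prodr_ge0 => i _; rewrite /bern; case: (X i); lra.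
- move=> p _ /andP[p0 p1].
  by apply: prodr_gt0 => i _; rewrite /bern; case: (X i); lra.
Qed.

Definition prefix k : {set 'I_n} := [set i : 'I_n | (i < k)%N]%SET.

Lemma prefix_notin k : k \notin prefix k.
Proof. by rewrite inE ltnn. Qed.

Lemma card_prefix k : #|prefix k| = k.
Proof.
rewrite -sum1_card (eq_bigl (fun i : 'I_n => (i < k)%N)) => [|i]; last by rewrite inE.
by rewrite -(big_ord_widen n (fun=> 1%N) (ltnW (ltn_ord k))) sum1_card card_ord.
Qed.

Lemma lik_prefix k p X : lik (prefix k) p X = p ^+ qk X k * (1 - p) ^+ (k - qk X k).
Proof.
rewrite likE card_prefix /qk; congr (_ ^+ _ * _ ^+ (_ - _)); apply: eq_card => i.
all: by rewrite !inE.
Qed.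

Lemma Pp_lik p X : Pp p X = lik [set: 'I_n] p X.
Proof.
rewrite likE cardsT card_ord /Pp /nheads.
by congr (_ ^+ _ * _ ^+ (_ - _)); apply: eq_card => i; rewrite !inE.
Qed.

Lemma admissible_upd K k j b X : admissible K -> j \notin prefix k ->
  K (upd X j b) k = K X k.
Proof.
case=> causal _ jk; apply: causal => i ik; rewrite upd_neq //.
by apply: contraNneq jk => <-; rewrite inE.
Qed.

Definition marglik_next k X (b : bool) : R := marglik (k |: prefix k) (upd X k b).

Lemma marglik_next_gt0 k X b : 0 < marglik_next k X b.
Proof. exact: marglik_gt0. Qed.

Lemma Kstar_marglik X k : Kstar X k =
  (marglik_next k X true - marglik_next k X false) /
  (marglik_next k X true + marglik_next k X false).
Proof.
rewrite /marglik_next marglik_consistent ?prefix_notin // /marglik -RintegralB //;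
  try exact/continuous_integrable/continuous_lik.
congr (_ / _); apply: eq_Rintegral => p _; rewrite -lik_prefix //.
by rewrite !lik_upd_setU1 ?prefix_notin //= -mulrBl mulrC; congr (_ * _); ring.
Qed.

Lemma Kstar_in X k : -1 < Kstar X k < 1.
Proof.
by rewrite Kstar_marglik; apply: ratio_in_open; exact: marglik_next_gt0.
Qed.

Lemma admissible_Kstar : admissible Kstar.
Proof.
split=> [k X Y XY | X k]; last by have /andP[? ?] := Kstar_in X k; rewrite ler_norml !ltW.
have qXY : qk X k = qk Y k.
  by apply: eq_card => i; rewrite !inE; case: ltnP => // ik; rewrite XY.
by rewrite /Kstar qXY.
Qed.

Definition log_return (u : R) (b : bool) : R := ln (1 + u * sgnb R b).

Definition interior K := forall X k, -1 < K X k < 1.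

Lemma ELG_interior K p : interior K -> ELG K p = (((n%:R)^-1)%:E *
  \sum_X (lik [set: 'I_n] p X)%:E * (\sum_(k < n) log_return (K X k) (X k))%:E)%E.
Proof.
move=> intK; congr (_ * _)%E; apply: eq_bigr => X _.
rewrite Pp_lik -sumEFin; congr (_ * _)%E; apply: eq_bigr => k _.
rewrite /elog ifF //; apply/negbTE; rewrite -ltNge.
by have /andP[? ?] := intK X k; rewrite /sgnb; case: (X k); rewrite ?mulr1 ?mulrN1; lra.
Qed.

Lemma fobj_interior K : interior K -> fobj P K =
  ((n%:R)^-1 * \sum_X marglik [set: 'I_n] X * \sum_(k < n) log_return (K X k) (X k))%:E.
Proof.
have integrable_term X c : mu.-integrable P (fun p => (lik [set: 'I_n] p X)%:E * c%:E)%E.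
  by apply: integrableZr => //; exact/continuous_integrable/continuous_lik.
move=> intK; rewrite /fobj; under eq_integral do rewrite ELG_interior //.
rewrite integralZl //; last by apply: integrable_sum => [|X _]; [exact: mP|exact: integrable_term].
rewrite integral_sum; [|exact: mP|move=> X; exact: integrable_term].
have integral_term X c : (\int[mu]_(p in P) ((lik [set: 'I_n] p X)%:E * c%:E))%E =
    ((marglik [set: 'I_n] X)%:E * c%:E)%E.
  have cont_term : continuous (fun p : R => lik [set: 'I_n] p X * c).
    by move=> p; apply: continuousM; [exact: continuous_lik|exact: cst_continuous].
  under eq_integral do rewrite -EFinM.
  rewrite (continuous_integralEFin P01 mP cont_term) RintegralZr //.
  exact/continuous_integrable/continuous_lik.
under eq_bigr do rewrite integral_term -EFinM.
by rewrite sumEFin -EFinM.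
Qed.

Lemma not_interior_ruin K : admissible K -> ~ interior K ->
  exists X k, 1 + K X k * sgnb R (X k) = 0.
Proof.
move=> admK; apply: contra_notP => noruin X k.
have := admK.2 X k; rewrite ler_norml => /andP[K_ge K_le].
have ruin b : K X k != - sgnb R b.
  apply/eqP => Ku; apply: noruin; exists (upd X k b), k.
  by rewrite admissible_upd ?prefix_notin // upd_eq Ku; clear Ku; case: b; rewrite /sgnb /=; ring.
by have := ruin true; have := ruin false; rewrite /sgnb opprK; lra.
Qed.

Lemma ELG_ruin K p : admissible K -> ~ interior K -> 0 < p < 1 -> ELG K p = -oo%E.
Proof.
move=> admK /(not_interior_ruin admK) [X [k ruin]] p01.
have n0 : (0 < n)%N by case: n X k {ruin} => [|m] _ [].
rewrite /ELG; have -> : (\sum_X' (Pp p X')%:E *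
    \sum_(k < n) elog (1 + K X' k * sgnb R (X' k)) = -oo)%E.
  apply/eqP; rewrite esum_eqNy; apply/existsP; exists X => /=.
  have -> : (\sum_(k < n) elog (1 + K X k * sgnb R (X k)) = -oo)%E.
    by apply/eqP; rewrite esum_eqNy; apply/existsP; exists k; rewrite /= ruin /elog lexx.
  rewrite gt0_muleNy // lte_fin Pp_lik.
  by have /andP[p0 p1] := p01; apply: prodr_gt0 => i _; rewrite /bern; case: (X i); lra.
by rewrite gt0_muleNy // lte_fin invr_gt0 ltr0n.
Qed.

Lemma fobj_ruin K : admissible K -> ~ interior K -> fobj P K = -oo%E.
Proof.
move=> admK intK; rewrite /fobj (ae_eq_integral (cst -oo%E)) //.
- by rewrite integral_cst // gt0_mulNye.
- rewrite /ELG; apply: emeasurable_funM; first exact: measurable_cst.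
  apply: emeasurable_sum => X; apply: emeasurable_funM; last exact: measurable_cst.
  under eq_fun do rewrite Pp_lik.
  exact/measurable_int/continuous_integrable/continuous_lik.
- by apply: ae_in_open01 => // p _ p01; rewrite ELG_ruin.
Qed.

Definition stage_gain K k X : R :=
  marglik_next k X true * log_return (K X k) true +
  marglik_next k X false * log_return (K X k) false.

Definition gain K : R :=
  \sum_(k < n) 2^-#|~: prefix k| * \sum_X stage_gain K k X.

Lemma sum_marglik_log_return K : admissible K ->
  \sum_X marglik [set: 'I_n] X * \sum_(k < n) log_return (K X k) (X k) = gain K.
Proof.
move=> admK; under eq_bigr do rewrite mulr_sumr.
rewrite exchange_big; apply: eq_bigr => k _ /=.
rewrite (sum_marginal_at marglik_consistent (prefix_notin k)
  (h := fun X b => log_return (K X k) b)) // => X i b iS c.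
by rewrite admissible_upd.
Qed.

Lemma stage_gain_lt K k X : interior K -> K X k != Kstar X k ->
  stage_gain K k X < stage_gain Kstar k X.
Proof.
move=> intK KX; rewrite /stage_gain /log_return /sgnb /= !mulr1 !mulrN1 Kstar_marglik //.
by apply: gibbs_lt; rewrite ?marglik_next_gt0 -?Kstar_marglik.
Qed.

Lemma stage_gain_le K k X : interior K -> stage_gain K k X <= stage_gain Kstar k X.
Proof.
move=> intK; have [KX|KX] := eqVneq (K X k) (Kstar X k).
  by rewrite /stage_gain KX.
exact/ltW/stage_gain_lt.
Qed.

Lemma gain_lt K k X : interior K -> K X k != Kstar X k -> gain K < gain Kstar.
Proof.
move=> intK KX; have c_gt0 j : 0 < 2^-#|~: prefix j| :> R by rewrite invr_gt0 exprn_gt0.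
rewrite /gain; apply: (ler_lt_sum (i0 := k)) => [j|].
  by rewrite ler_pM2l //; apply: ler_sum => Y _; exact: stage_gain_le.
rewrite ltr_pM2l //; apply: (ler_lt_sum (i0 := X)) => [Y|]; first exact: stage_gain_le.
exact: stage_gain_lt.
Qed.

Lemma fobj_gain K : admissible K -> interior K -> fobj P K = ((n%:R)^-1 * gain K)%:E.
Proof. by move=> admK intK; rewrite fobj_interior // sum_marglik_log_return. Qed.

Lemma fobj_lt_Kstar K X k : admissible K -> K X k != Kstar X k ->
  (fobj P K < fobj P Kstar)%E.
Proof.
move=> admK KX; have n_gt0 : 0 < (n%:R : R)^-1.
  by rewrite invr_gt0 ltr0n (leq_ltn_trans _ (ltn_ord k)).
rewrite (fobj_gain admissible_Kstar); last exact: Kstar_in.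
have [intK|/(fobj_ruin admK)->] := pselect (interior K); last exact: ltNyr.
by rewrite fobj_gain // lte_fin ltr_pM2l // (gain_lt intK KX).
Qed.

End Betting.

Theorem mainTheorem2 (R : realType) (n : nat) (P : set R) :
  (1 <= n)%N ->
  P `<=` `[0%R, 1%R] ->
  measurable P ->
  (0 < @lebesgue_measure R P)%E ->
  [/\ @admissible R n (@Kstar R n P),
      (forall K : controller R n, @admissible R n K -> (@fobj R n P K <= @fobj R n P (@Kstar R n P))%E)
    & (forall K : controller R n, @admissible R n K ->
         (forall K' : controller R n, @admissible R n K' -> (@fobj R n P K' <= @fobj R n P K)%E) ->
         forall (X : spath n) (k : 'I_n), K X k = @Kstar R n P X k)].
Proof.
move=> _ P01 mP muP; have admKstar : admissible (@Kstar R n P).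
  exact: admissible_Kstar.
split=> // K admK; last first.
  move=> Kmax X k; apply/eqP; apply: contraT => KX.
  by have := Kmax _ admKstar; rewrite leNgt (fobj_lt_Kstar P01 mP muP admK KX).
have [[X [k KX]]|noKX] := pselect (exists X k, K X k != @Kstar R n P X k).
  exact/ltW/(fobj_lt_Kstar P01 mP muP admK KX).
have -> // : K = @Kstar R n P.
by apply/funext => X; apply/funext => k; apply/eqP; apply: contra_notT noKX => KX; exists X, k.
Qed.
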